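(* Let $X$ be a finite set and let $\tau\subseteq\binom{X}{2}$ with $L(\tau)=X$. The following are equivalent: (i) $\tau$ is thin, i.e. $|L(\tau')|\ge|\tau'|+1$ for every non-empty $\tau'\subseteq\tau$; (ii) there exists a rooted binary phylogenetic $X$-tree $T$ for which the map $s\mapsto{\rm lca}_T(s)$ from $\tau$ to the set of interior vertices of $T$ is one-to-one; (iii) as in (ii), but with $T$ a rooted caterpillar tree.
   Context: $L(\tau)=\bigcup_{s\in\tau}s$. A rooted binary phylogenetic $X$-tree is a rooted tree whose leaves (out-degree 0) are bijectively labelled by $X$ and whose non-leaf vertices are unlabelled with out-degree exactly 2. Interior vertices are non-leaf vertices. A cherry is a pair of leaves adjacent to a common vertex; a rooted caterpillar tree is a rooted binary phylogenetic tree with at most one cherry. For $s\subseteq X$, ${\rm lca}_T(s)$ is the least common ancestor in $T$ of the leaves in $s$. *)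

From mathcomp Require Import all_boot.
Set Implicit Arguments. Unset Strict Implicit. Unset Printing Implicit Defensive.

Inductive btree (T : Type) : Type :=
| Leaf of T
| Node of btree T & btree T.
Arguments Leaf {T} _.
Arguments Node {T} _ _.

Section Phylo.
Variable X : finType.

Fixpoint leaves (t : btree X) : seq X :=
  match t with Leaf x => [:: x] | Node l r => leaves l ++ leaves r end.

Definition phylo_tree (t : btree X) : bool :=
  uniq (leaves t) && all (fun x => x \in leaves t) (enum X).

(* Vertices are addressed by their path from the root
   (false = left child, true = right child). *)
Fixpoint subtree_at (t : btree X) (p : seq bool) : option (btree X) :=
  match p, t with
  | [::], _ => Some t
  | b :: p', Node l r => subtree_at (if b then r else l) p'
  | _ :: _, Leaf _ => None
  end.

Definition is_interior (t : btree X) (p : seq bool) : bool :=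
  if subtree_at t p is Some (Node _ _) then true else false.

Fixpoint lca (t : btree X) (s : {set X}) : seq bool :=
  match t with
  | Leaf _ => [::]
  | Node l r =>
      if s \subset [set x | x \in leaves l] then false :: lca l s
      else if s \subset [set x | x \in leaves r] then true :: lca r s
      else [::]
  end.

Fixpoint cherries (t : btree X) : nat :=
  match t with
  | Leaf _ => 0
  | Node (Leaf _) (Leaf _) => 1
  | Node l r => cherries l + cherries r
  end.

Definition caterpillar (t : btree X) : bool := cherries t <= 1.

Definition Lset (tau : {set {set X}}) : {set X} := \bigcup_(s in tau) s.

Definition thin (tau : {set {set X}}) : Prop :=
  forall tau' : {set {set X}}, tau' \subset tau -> tau' != set0 ->
    #|tau'| + 1 <= #|Lset tau'|.

Definition lca_injective (t : btree X) (tau : {set {set X}}) : Prop :=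
  (forall s, s \in tau -> is_interior t (lca t s)) /\
  {in tau &, injective (lca t)}.

End Phylo.

From mathcomp Require Import all_boot zify.

(* (ii) => (i): for a family of pairs with injective lca map, at most one pair
   has the root as lca and every other pair lies below one of the two children,
   whose leaf sets are disjoint; induction over the tree gives
   |tau'| <= |L(tau')| - 1.
   (i) => (iii): by thinness the pairs of tau inside a nonempty Y have fewer
   elements than Y, so by double counting some y in Y lies in at most one of
   them. A caterpillar for Y \ y with y hung next to the new root then works,
   since only a pair containing y can have the new root as lca. *)

Set Implicit Arguments.
Unset Strict Implicit.
Unset Printing Implicit Defensive.

Section Phylo.
Variable X : finType.
Implicit Types (t : btree X) (s Y : {set X}) (sig tau : {set {set X}}).

Local Notation leafset t := [set x : X | x \in leaves t].

Lemma leafset_Node l r : leafset (Node l r) = leafset l :|: leafset r.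
Proof. by apply/setP => x; rewrite !inE mem_cat. Qed.

Lemma leafset_Leaf x : leafset (Leaf x) = [set x].
Proof. by apply/setP => y; rewrite !inE. Qed.

Lemma notsub_leafset_Leaf x s : 1 < #|s| -> ~~ (s \subset leafset (Leaf x)).
Proof.
rewrite leafset_Leaf => s_gt1; apply/negP => /subset_leq_card.
by rewrite cards1 leqNgt s_gt1.
Qed.

Lemma lca_interior t s : 1 < #|s| -> s \subset leafset t -> is_interior t (lca t s).
Proof.
move=> s_gt1; elim: t => [x|l IHl r IHr] /=.
  by move=> sub_s; case/negP: (notsub_leafset_Leaf x s_gt1).
by case: ifP => [/IHl|_]; [|case: ifP => [/IHr|]].
Qed.

Lemma phylo_treeE t : phylo_tree t = uniq (leaves t) && (leafset t == [set: X]).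
Proof.
congr andb; apply/allP/eqP => [in_t | all_t x _].
  by apply/setP => x; rewrite !inE in_t ?mem_enum.
by have := in_setT x; rewrite -all_t inE.
Qed.

Lemma sub_Lset sig s : s \in sig -> s \subset Lset sig.
Proof. exact: bigcup_sup. Qed.

Lemma Lset_subset sig Y : {in sig, forall s, s \subset Y} -> Lset sig \subset Y.
Proof. by move=> sub_sig; apply/bigcupsP. Qed.

Lemma Lset_mono sig1 sig2 : sig1 \subset sig2 -> Lset sig1 \subset Lset sig2.
Proof. by move=> /subsetP sub12; apply/Lset_subset => s /sub12/sub_Lset. Qed.

Section LsetSplit.
Variables (A B : {set X}) (sig : {set {set X}}).
Hypothesis disjAB : [disjoint A & B].
Hypothesis sig_sub : {in sig, forall s, s \subset A :|: B}.
Let sigA := [set s in sig | s \subset A].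
Let sigB := [set s in sig | ~~ (s \subset A) & s \subset B].
Let sigAB := [set s in sig | ~~ (s \subset A) & ~~ (s \subset B)].

Lemma card_Lset_split :
  #|sigA| <= #|Lset sigA|.-1 -> #|sigB| <= #|Lset sigB|.-1 -> #|sigAB| <= 1 ->
  #|sig| <= #|Lset sig|.-1.
Proof.
move=> leA leB leAB.
have card_sig : #|sig| = #|sigA| + #|sigB| + #|sigAB|.
  rewrite -(cardsID [set s : {set X} | s \subset A] sig).
  rewrite -(cardsID [set s : {set X} | s \subset B] (sig :\: _)) addnA.
  congr (_ + _ + _); apply: eq_card => s; rewrite !inE;
  by case: (s \in sig); case: (s \subset A); case: (s \subset B).
pose A' := Lset sigA :|: (Lset sigAB :&: A).
pose B' := Lset sigB :|: (Lset sigAB :&: B).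
have subA' : A' \subset A.
  by rewrite subUset subsetIr andbT; apply: Lset_subset => s; rewrite inE => /andP[].
have subB' : B' \subset B.
  by rewrite subUset subsetIr andbT; apply: Lset_subset => s; rewrite inE => /and3P[].
have A'B' : #|A'| + #|B'| <= #|Lset sig|.
  have := (leq_card_setU A' B').2.
  rewrite (disjointW subA' subB' disjAB) => /eqP <-.
  have [subA subB subAB] : [/\ sigA \subset sig, sigB \subset sig & sigAB \subset sig].
    by split; apply/subsetP => s; rewrite inE => /andP[].
  apply: subset_leq_card.
  by rewrite !subUset !subIset ?Lset_mono ?subA ?subB ?subAB.
have A'_ge : #|Lset sigA| <= #|A'| by rewrite subset_leq_card ?subsetUl.
have B'_ge : #|Lset sigB| <= #|B'| by rewrite subset_leq_card ?subsetUl.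
have meets_AB : sigAB != set0 -> 0 < #|A'| /\ 0 < #|B'|.
  case/set0Pn => s s_AB; have := s_AB; rewrite inE => /and3P[s_sig nsA nsB].
  have /subsetP sub_s := sub_Lset s_AB.
  have /subsetP sAB := sig_sub s_sig.
  rewrite !card_gt0; split; apply/set0Pn.
  - case/subsetPn: nsB => a sa naB; exists a.
    have aA : a \in A by move: (sAB a sa); rewrite inE (negbTE naB) orbF.
    by rewrite !inE sub_s ?aA ?orbT.
  - case/subsetPn: nsA => b sb nbA; exists b.
    have bB : b \in B by move: (sAB b sb); rewrite inE (negbTE nbA).
    by rewrite !inE sub_s ?bB ?orbT.
rewrite card_sig; case: (eqVneq sigAB set0) => [-> | /meets_AB []]; rewrite ?cards0; lia.
Qed.
End LsetSplit.

(* The truncated [.-1] makes the bound trivial for the empty family, so that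
   the induction needs no case split on emptiness. *)
Lemma card_le_Lset_lca t sig : uniq (leaves t) ->
  {in sig, forall s, 1 < #|s|} -> {in sig, forall s, s \subset leafset t} ->
  {in sig &, injective (lca t)} -> #|sig| <= #|Lset sig|.-1.
Proof.
elim: t sig => [x|l IHl r IHr] sig uniq_t sig_gt1 sig_sub lca_inj.
  suff -> : sig = set0 by rewrite cards0.
  apply/setP => s; rewrite inE; apply/negbTE/negP => s_sig.
  by case/negP: (notsub_leafset_Leaf x (sig_gt1 s s_sig)); apply: sig_sub.
move: uniq_t; rewrite cat_uniq => /and3P[uniq_l disj_lr uniq_r].
apply: (@card_Lset_split (leafset l) (leafset r)).
- apply/pred0P => x; rewrite !inE; apply/negbTE/andP => -[xl xr].
  by case/hasP: disj_lr; exists x.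
- by move=> s /sig_sub; rewrite leafset_Node.
- apply: IHl => //.
  + by move=> s; rewrite inE => /andP[/sig_gt1].
  + by move=> s; rewrite inE => /andP[].
  move=> s1 s2; rewrite !inE => /andP[s1_sig s1_l] /andP[s2_sig s2_l] eq_lca.
  by apply: lca_inj; rewrite //= s1_l s2_l eq_lca.
- apply: IHr => //.
  + by move=> s; rewrite inE => /and3P[/sig_gt1].
  + by move=> s; rewrite inE => /and3P[].
  move=> s1 s2; rewrite !inE.
  move=> /and3P[s1_sig /negbTE s1_l s1_r] /and3P[s2_sig /negbTE s2_l s2_r] eq_lca.
  by apply: lca_inj; rewrite //= s1_l s2_l s1_r s2_r eq_lca.
apply/card_le1_eqP => s1 s2; rewrite !inE.
move=> /and3P[s1_sig /negbTE s1_l /negbTE s1_r] /and3P[s2_sig /negbTE s2_l /negbTE s2_r].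
by apply: lca_inj; rewrite //= s1_l s2_l s1_r s2_r.
Qed.

Lemma lca_injective_thin t tau : phylo_tree t ->
  {in tau, forall s, 1 < #|s|} -> lca_injective t tau -> thin tau.
Proof.
rewrite phylo_treeE => /andP[uniq_t /eqP leaf_t] tau_gt1 [_ lca_inj].
move=> tau' /subsetP sub_tau' /set0Pn[s s_tau'].
have tau'_gt0 : 0 < #|tau'| by apply/card_gt0P; exists s.
suff : #|tau'| <= #|Lset tau'|.-1 by lia.
apply: card_le_Lset_lca uniq_t _ _ _.
- by move=> s' /sub_tau'/tau_gt1.
- by move=> s' _; rewrite leaf_t subsetT.
- by move=> s1 s2 /sub_tau' s1_tau /sub_tau' s2_tau; apply: lca_inj.
Qed.

Lemma sum_card_incident sig Y : {in sig, forall s, s \subset Y} ->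
  \sum_(y in Y) #|[set s in sig | y \in s]| = \sum_(s in sig) #|s|.
Proof.
move=> sig_sub; transitivity (\sum_(y in Y) \sum_(s in sig) (y \in s)).
  apply: eq_bigr => y _; rewrite -sum1dep_card big_mkcondr /=.
  by apply: eq_bigr => s _; case: (y \in s).
rewrite exchange_big; apply: eq_bigr => s /sig_sub /subsetP sub_sY.
rewrite -sum1_card big_mkcond [RHS]big_mkcond /=; apply: eq_bigr => y _.
by case: (boolP (y \in s)) => [/sub_sY -> | _]; rewrite ?if_same.
Qed.

Lemma thin_low_degree tau Y : thin tau -> {in tau, forall s, #|s| <= 2} -> Y != set0 ->
  exists2 y, y \in Y & #|[set s in tau | s \subset Y & y \in s]| <= 1.
Proof.
move=> thin_tau tau_le2 nzY; pose sig := [set s in tau | s \subset Y].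
have deg_sig y : [set s in tau | s \subset Y & y \in s] = [set s in sig | y \in s].
  by apply/setP => s; rewrite !inE andbA.
have [/exists_inP[y yY deg_y] | /exists_inPn deg_ge2] :=
  boolP [exists y in Y, #|[set s in sig | y \in s]| <= 1].
  by exists y; rewrite ?deg_sig.
have sig_tau : sig \subset tau by apply/subsetP => s; rewrite inE => /andP[].
have sig_Y : {in sig, forall s, s \subset Y} by move=> s; rewrite inE => /andP[].
have le_Y_sig : #|Y| * 2 <= #|sig| * 2.
  rewrite -!sum_nat_const; apply: (@leq_trans (\sum_(s in sig) #|s|)).
    rewrite -(sum_card_incident sig_Y); apply: leq_sum => y yY.
    by rewrite leqNgt deg_ge2.
  by apply: leq_sum => s /(subsetP sig_tau)/tau_le2.
have Y_gt0 : 0 < #|Y| by rewrite card_gt0.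
have nz_sig : sig != set0 by rewrite -card_gt0; lia.
have := thin_tau sig sig_tau nz_sig.
have := subset_leq_card (Lset_subset sig_Y); lia.
Qed.

Lemma lca_Node_Leaf t y s : 1 < #|s| ->
  lca (Node t (Leaf y)) s = if s \subset leafset t then false :: lca t s else [::].
Proof. by move=> s_gt1 /=; rewrite (negbTE (notsub_leafset_Leaf y s_gt1)); case: ifP. Qed.

Lemma caterpillar_Node_Leaf t y : caterpillar t -> caterpillar (Node t (Leaf y)).
Proof. by case: t => //= l r; rewrite /caterpillar /= addn0. Qed.

Lemma thin_caterpillar_on tau Y : thin tau -> {in tau, forall s, #|s| = 2} -> Y != set0 ->
  exists t, [/\ uniq (leaves t), leafset t = Y, caterpillar t &
              {in [set s in tau | s \subset Y] &, injective (lca t)}].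
Proof.
move=> thin_tau tau2; have tau_le2 : {in tau, forall s, #|s| <= 2} by move=> s /tau2 ->.
have [n] := ubnP #|Y|; elim: n Y => // n IHn Y /ltnSE leYn nzY.
have [y yY deg_y] := thin_low_degree thin_tau tau_le2 nzY.
have [Yy0 | nzYy] := eqVneq (Y :\ y) set0.
  have Y1 : Y = [set y] by rewrite -(setD1K yY) Yy0 setU0.
  exists (Leaf y); split; rewrite ?leafset_Leaf //.
  move=> s1 s2; rewrite inE => /andP[/tau2 s1_2 /subset_leq_card].
  by rewrite Y1 cards1 s1_2.
have ltYyn : #|Y :\ y| < n by apply: leq_trans leYn; rewrite (cardsD1 y Y) yY.
have [t [uniq_t leaf_t cat_t inj_t]] := IHn _ ltYyn nzYy.
exists (Node t (Leaf y)); split.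
- have : y \notin leafset t by rewrite leaf_t setD11.
  by rewrite /= cat_uniq uniq_t inE /= orbF => ->.
- by rewrite leafset_Node leaf_t leafset_Leaf setUC setD1K.
- exact: caterpillar_Node_Leaf.
move=> s1 s2; rewrite !inE => /andP[s1_tau s1Y] /andP[s2_tau s2Y].
rewrite !lca_Node_Leaf ?tau2 // leaf_t !subsetD1 s1Y s2Y /=.
case: ifPn => [y_s1 | /negPn y_s1]; case: ifPn => [y_s2 | /negPn y_s2] //.
  by case=> /inj_t; apply; rewrite inE subsetD1 ?s1_tau ?s2_tau ?s1Y ?s2Y.
by move=> _; apply: (card_le1_eqP deg_y); rewrite inE ?s1_tau ?s2_tau ?s1Y ?s2Y.
Qed.

Lemma thin_caterpillar tau : 0 < #|X| -> {in tau, forall s, #|s| = 2} -> thin tau ->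
  exists t, phylo_tree t /\ caterpillar t /\ lca_injective t tau.
Proof.
move=> X_gt0 tau2 thin_tau.
have nzX : [set: X] != set0 by rewrite -card_gt0 cardsT.
have [t [uniq_t leaf_t cat_t inj_t]] := thin_caterpillar_on thin_tau tau2 nzX.
exists t; split; first by rewrite phylo_treeE uniq_t leaf_t eqxx.
split=> //; split=> [s s_tau | s1 s2 s1_tau s2_tau].
  by apply: lca_interior; rewrite ?tau2 ?leaf_t ?subsetT.
by apply: inj_t; rewrite inE ?s1_tau ?s2_tau subsetT.
Qed.

End Phylo.

Theorem theorem4 (X : finType) (tau : {set {set X}})
  (hX : 0 < #|X|)
  (htau2 : forall s, s \in tau -> #|s| = 2)
  (hL : Lset tau = setT) :
  (thin tau <-> exists t : btree X, phylo_tree t /\ lca_injective t tau) /\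
  ((exists t : btree X, phylo_tree t /\ lca_injective t tau) <->
   (exists t : btree X, phylo_tree t /\ caterpillar t /\ lca_injective t tau)).
Proof.
have tau_gt1 : {in tau, forall s : {set X}, 1 < #|s|} by move=> s /htau2 ->.
have ii_i : (exists t, phylo_tree t /\ lca_injective t tau) -> thin tau.
  by case=> t [phylo_t inj_t]; apply: lca_injective_thin phylo_t tau_gt1 inj_t.
have i_iii := thin_caterpillar hX htau2.
have iii_ii : (exists t, phylo_tree t /\ caterpillar t /\ lca_injective t tau) ->
    exists t, phylo_tree t /\ lca_injective t tau.
  by case=> t [phylo_t [_ inj_t]]; exists t.
split; split.
- by move/i_iii/iii_ii.
- exact: ii_i.
- by move/ii_i/i_iii.
- exact: iii_ii.
Qed.
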